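(* Let $G$ be a finite group and $S$ one of the Mathieu groups $M_{11}, M_{12}, M_{22}, M_{23}, M_{24}$. If $|G| = |S|$, then $G$ is neither a Frobenius group nor a 2-Frobenius group.
   Context: A finite group $G$ is a 2-Frobenius group if it has a normal series $1 \trianglelefteq A \trianglelefteq B \trianglelefteq G$ such that $B$ is a Frobenius group with Frobenius kernel $A$ and $G/A$ is a Frobenius group with Frobenius kernel $B/A$. Orders: $|M_{11}|=2^4\cdot3^2\cdot5\cdot11$, $|M_{12}|=2^6\cdot3^3\cdot5\cdot11$, $|M_{22}|=2^7\cdot3^2\cdot5\cdot7\cdot11$, $|M_{23}|=2^7\cdot3^2\cdot5\cdot7\cdot11\cdot23$, $|M_{24}|=2^{10}\cdot3^3\cdot5\cdot7\cdot11\cdot23$. *)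

From mathcomp Require Import all_boot all_fingroup all_solvable frobenius.
Set Implicit Arguments. Unset Strict Implicit. Unset Printing Implicit Defensive.
Local Open Scope group_scope.

Definition mathieu_orders : seq nat :=
  [:: 2^4 * 3^2 * 5 * 11;
      2^6 * 3^3 * 5 * 11;
      2^7 * 3^2 * 5 * 7 * 11;
      2^7 * 3^2 * 5 * 7 * 11 * 23;
      2^10 * 3^3 * 5 * 7 * 11 * 23]%N.

Definition two_Frobenius (gT : finGroupType) (G : {group gT}) : Prop :=
  exists (A B : {group gT}),
    [/\ A <| G, B <| G, A \subset B,
        [Frobenius B with kernel A]
      & [Frobenius (G / A) with kernel (B / A)]].

From mathcomp Require Import all_boot all_fingroup all_solvable frobenius.
From mathcomp Require Import vcharacter zify.
Set Implicit Arguments. Unset Strict Implicit. Unset Printing Implicit Defensive.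

(* If G is a Frobenius group with kernel K, then for every prime p
   the index |G : K| (the order of a complement) divides |K|_p - 1: for each
   prime r dividing |G : K|, a Sylow r-subgroup Q of N_G(P), P a Sylow
   p-subgroup of K, has order at least |G : K|_r by the Frattini argument and
   acts fixed-point-freely on P.  So k = |K| and h = |G : K| form a
   "Frobenius pair": coprime, both > 1, and h | k_p - 1 for all p.  A 2-Frobenius
   group G yields a*b*c = |G| with (a, b) and (b, c) Frobenius pairs.
     These conditions only depend on the prime-power parts of k, h (resp.
   a, b, c) at the primes of |G|, and coprimality leaves finitely many
   possible "profiles" of these parts, which we enumerate from the
   factorisation of |G| (never computing with |G| itself).  A computation
   shows that for the five Mathieu orders no profile satisfies the
   conditions, which proves the theorem. *)

Local Open Scope group_scope.

Section FrobeniusOrders.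

Variable gT : finGroupType.
Implicit Types G K P Q : {group gT}.

(* Frattini argument: G = K N_G(P), hence |G : K| divides |N_G(P)|. *)
Lemma index_dvd_Sylow_normaliser G K P (p : nat) :
  K <| G -> p.-Sylow(K) P -> #|G : K| %| #|'N_G(P)|.
Proof.
move=> nsKG sylP.
have := mul_cardG K 'N_G(P); rewrite (Frattini_arg nsKG sylP).
rewrite -(Lagrange (normal_sub nsKG)).
rewrite -mulnA => /eqP; rewrite eqn_pmul2l ?cardG_gt0 // => /eqP ->.
exact: dvdn_mulr.
Qed.

(* An r-subgroup of a Frobenius group, r dividing the index of the kernel K,
   acts fixed-point-freely on K: the centraliser of a nontrivial element of K
   lies in K, whose order is prime to r. *)
Lemma Frobenius_ker_semiregular G K Q (r : nat) :
    [Frobenius G with kernel K] -> Q \subset G -> r.-group Q ->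
    r \in \pi(#|G : K|) -> semiregular K Q.
Proof.
move=> frobG sQG rQ r_index x /setD1P[ntx Qx].
have [_ _ _ regK] := Frobenius_kerP frobG.
have r'K : r^'.-nat #|K|.
  apply: pi'_p'nat r_index.
  by rewrite -coprime_pi' ?cardG_gt0 // coprime_sym Frobenius_ker_coprime.
apply/trivgP/subsetP=> y /setIP[Ky cxy]; apply: contraR ntx => nty.
have Kx : x \in K.
  apply: (subsetP (regK y _)); first by rewrite inE nty.
  by rewrite inE (subsetP sQG) // cent1C.
by rewrite -order_eq1 (pnat_1 (mem_p_elt rQ Qx) (pnat_dvd (order_dvdG Kx) r'K)).
Qed.

Lemma Frobenius_index_dvd_part_pred G K (p : nat) :
  [Frobenius G with kernel K] -> #|G : K| %| (#|K|`_p).-1.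
Proof.
move=> frobG; have [_ _ nsKG _] := Frobenius_kerP frobG.
have [P sylP] := Sylow_exists p K.
apply/dvdn_partP=> [|r r_index]; first exact: indexg_gt0.
have [Q sylQ] := Sylow_exists r 'N_G(P).
have [sQN rQ _] := and3P sylQ; have [sQG nPQ] := subsetIP sQN.
rewrite -(card_Hall sylP); apply: dvdn_trans (regular_norm_dvd_pred nPQ _).
  by rewrite (card_Hall sylQ) partn_dvd // (index_dvd_Sylow_normaliser nsKG sylP).
apply: semiregularS (pHall_sub sylP) (subxx Q) _.
exact: Frobenius_ker_semiregular frobG sQG rQ r_index.
Qed.

End FrobeniusOrders.

(* The arithmetic shadow of a Frobenius group: kernel order k, complement
   order h. *)
Definition Frobenius_pair (k h : nat) : Prop :=
  [/\ coprime k h, 1 < k, 1 < h & forall p : nat, h %| (k`_p).-1].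

Lemma Frobenius_pair_orders (gT : finGroupType) (G K : {group gT}) :
  [Frobenius G with kernel K] -> Frobenius_pair #|K| #|G : K|.
Proof.
move=> frobG; have [ntK ltKG _ _] := Frobenius_kerP frobG.
split; rewrite ?cardG_gt1 ?indexg_gt1 ?proper_subn //.
  exact: Frobenius_ker_coprime.
by move=> p; apply: Frobenius_index_dvd_part_pred.
Qed.

Lemma two_Frobenius_orders (gT : finGroupType) (G : {group gT}) :
  two_Frobenius G ->
  exists a b c, [/\ (a * b * c)%N = #|G|, Frobenius_pair a b & Frobenius_pair b c].
Proof.
case=> A [B [nsAG nsBG sAB frobB frobGA]].
have nAB : B \subset 'N(A) := subset_trans (normal_sub nsBG) (normal_norm nsAG).
exists #|A|, #|B / A|, #|(G / A) : (B / A)|; split.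
- rewrite -mulnA Lagrange ?quotientS ?normal_sub // card_quotient ?normal_norm //.
  by rewrite Lagrange ?normal_sub.
- by rewrite card_quotient //; apply: Frobenius_pair_orders.
exact: Frobenius_pair_orders.
Qed.

Local Close Scope group_scope.

Definition fvalue (F : seq (nat * nat)) : nat := \prod_(x <- F) x.1 ^ x.2.

Definition factorisation (F : seq (nat * nat)) : bool :=
  all prime (unzip1 F) && uniq (unzip1 F).

Lemma fvalue_gt0 F : all prime (unzip1 F) -> 0 < fvalue F.
Proof.
move=> /allP prF; rewrite /fvalue big_seq_cond prodn_cond_gt0 // => x.
by case/andP=> xF _; rewrite expn_gt0 prime_gt0 // prF // map_f.
Qed.

Lemma prime_dvd_fvalue F p :
  all prime (unzip1 F) -> prime p -> p %| fvalue F -> p \in unzip1 F.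
Proof.
move=> prF pr_p; rewrite /fvalue Euclid_dvd_prod //.
elim: F prF => [|x F IH] /=; first by rewrite big_nil.
case/andP=> pr_x prF; rewrite big_cons Euclid_dvdX // inE.
case/orP=> [/andP[p_dvd_x _] | /(IH prF) ->]; last by rewrite orbT.
by rewrite -(dvdn_prime2 pr_p pr_x) p_dvd_x.
Qed.

Lemma part_fvalue F p e :
  factorisation F -> (p, e) \in F -> (fvalue F)`_p = p ^ e.
Proof.
elim: F => [|[q f] F IH] //.
rewrite /factorisation /unzip1 map_cons cons_uniq [all _ (_ :: _)]/= inE.
case/and3P=> /andP[pr_q prF] qF uF.
have ->: fvalue ((q, f) :: F) = q ^ f * fvalue F by rewrite /fvalue big_cons.
rewrite partnM ?fvalue_gt0 ?expn_gt0 ?prime_gt0 // partnX p_part logn_prime //.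
case/orP=> [/eqP[-> ->] | pF].
  rewrite eqxx part_p'nat ?muln1 // p'natE //.
  by apply: contra qF; apply: prime_dvd_fvalue.
have q'p : (p == q) = false.
  by apply: contraNF qF => /eqP <-; apply/mapP; exists (p, e).
by rewrite q'p expn0 exp1n mul1n IH // /factorisation prF.
Qed.

Lemma has_part_gt1 F d :
    all prime (unzip1 F) -> d %| fvalue F -> 1 < d ->
  has (fun x : nat * nat => 1 < d`_x.1) F.
Proof.
move=> prF dF d_gt1; have pr_p := pdiv_prime d_gt1.
have /mapP[x xF def_p] := prime_dvd_fvalue prF pr_p (dvdn_trans (pdiv_dvd d) dF).
apply/hasP; exists x => //; rewrite -def_p p_part_gt1 mem_primes pr_p pdiv_dvd.
by rewrite ltnW.
Qed.

Lemma coprime_part_eq1 k h (p : nat) : coprime k h -> k`_p = 1 \/ h`_p = 1.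
Proof.
move=> ckh; have [p_k | p'k] := boolP (p \in \pi(k)); last first.
  by left; apply/eqP; rewrite p_part_eq1.
right; apply/eqP; rewrite p_part_eq1; apply/negP.
rewrite !mem_primes in p_k * => /and3P[pr_p _ p_dvd_h].
have [_ _ p_dvd_k] := and3P p_k.
by have := coprime_dvdl p_dvd_k ckh; rewrite prime_coprime // p_dvd_h.
Qed.

(* Parts at p of a Frobenius pair (k, h) with (k * h)_p = p ^ e: by
   coprimality the whole p-part lies in k or in h. *)
Definition Frobenius_options (x : nat * nat) : seq (nat * nat) :=
  [:: (x.1 ^ x.2, 1); (1, x.1 ^ x.2)].

Lemma Frobenius_options_part k h (p e : nat) :
    0 < k -> 0 < h -> coprime k h -> (k * h)`_p = p ^ e ->
  (k`_p, h`_p) \in Frobenius_options (p, e).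
Proof.
move=> k_gt0 h_gt0 ckh; rewrite partnM // !inE.
case: (coprime_part_eq1 p ckh) => ->; rewrite ?mul1n ?muln1 => ->;
  by rewrite eqxx ?orbT.
Qed.

(* Parts at p of a triple (a, b, c) with a, b and b, c coprime and
   (a * b * c)_p = p ^ e: the whole p-part lies in b, or is shared by a and c. *)
Definition two_Frobenius_options (x : nat * nat) : seq (nat * nat * nat) :=
  (1, x.1 ^ x.2, 1) :: [seq (x.1 ^ i, 1, x.1 ^ (x.2 - i)) | i <- iota 0 x.2.+1].

Lemma two_Frobenius_options_part a b c (p e : nat) :
    prime p -> 0 < a -> 0 < b -> 0 < c -> coprime a b -> coprime b c ->
    (a * b * c)`_p = p ^ e ->
  (a`_p, b`_p, c`_p) \in two_Frobenius_options (p, e).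
Proof.
move=> pr_p a_gt0 b_gt0 c_gt0 cab cbc.
rewrite !partnM ?muln_gt0 ?a_gt0 ?b_gt0 // inE.
have [b_p1 | ntb_p] := eqVneq b`_p 1; last first.
  have [a_p1 | b_p1] := coprime_part_eq1 p cab; last by rewrite b_p1 eqxx in ntb_p.
  have [b_p1 | c_p1] := coprime_part_eq1 p cbc; first by rewrite b_p1 eqxx in ntb_p.
  by rewrite a_p1 c_p1 mul1n muln1 => ->; rewrite eqxx.
rewrite b_p1 muln1 !p_part -expnD => /eqP; rewrite eqn_exp2l ?prime_gt1 //.
move=> /eqP def_e; apply/orP; right; apply/mapP; exists (logn p a).
  by rewrite mem_iota add0n ltnS /= -def_e leq_addr.
by rewrite /= -def_e addKn.
Qed.

(* The conditions on a Frobenius pair, read on the lists of parts (k_p, h_p). *)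
Definition Frobenius_profile (Z : seq (nat * nat)) : bool :=
  [&& has (fun z => 1 < z.1) Z, has (fun z => 1 < z.2) Z &
      all (fun z => all (fun w => w.2 %| z.1.-1) Z) Z].

Lemma Frobenius_pair_profile F k h :
    all prime (unzip1 F) -> k * h %| fvalue F -> Frobenius_pair k h ->
  Frobenius_profile [seq (k`_x.1, h`_x.1) | x : nat * nat <- F].
Proof.
move=> prF khF [_ k_gt1 h_gt1 h_dvd]; apply/and3P; split.
- by rewrite has_map; apply: has_part_gt1 (dvdn_trans (dvdn_mulr h _) khF) k_gt1.
- by rewrite has_map; apply: has_part_gt1 (dvdn_trans (dvdn_mull k _) khF) h_gt1.
apply/allP=> _ /mapP[x _ ->]; apply/allP=> _ /mapP[y _ ->] /=.
exact: dvdn_trans (dvdn_part _ _) (h_dvd _).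
Qed.

Definition two_Frobenius_profile (Y : seq (nat * nat * nat)) : bool :=
  Frobenius_profile [seq y.1 | y <- Y] &&
  Frobenius_profile [seq (y.1.2, y.2) | y <- Y].

Fixpoint cartesian (T : Type) (ss : seq (seq T)) : seq (seq T) :=
  if ss is s :: ss' then [seq x :: v | x <- s, v <- cartesian ss'] else [:: [::]].

Lemma map_in_cartesian (A T : eqType) (f : A -> T) (g : A -> seq T) (r : seq A) :
  {in r, forall a, f a \in g a} -> map f r \in cartesian (map g r).
Proof.
elim: r => [|a r IH] fg /=; first by rewrite inE.
rewrite allpairs_f ?fg ?mem_head // IH // => b rb.
by apply: fg; rewrite inE rb orbT.
Qed.

Lemma Frobenius_profile_exists F k h :
    factorisation F -> k * h = fvalue F -> Frobenius_pair k h ->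
  has Frobenius_profile (cartesian (map Frobenius_options F)).
Proof.
move=> factF khF frob_kh; have [ckh k_gt1 h_gt1 _] := frob_kh.
have prF : all prime (unzip1 F) by case/andP: factF.
apply/hasP; exists [seq (k`_x.1, h`_x.1) | x : nat * nat <- F].
  apply: map_in_cartesian => -[p e] xF.
  apply: Frobenius_options_part (ltnW k_gt1) (ltnW h_gt1) ckh _.
  by rewrite khF (part_fvalue factF xF).
by apply: Frobenius_pair_profile; rewrite ?khF.
Qed.

Lemma two_Frobenius_profile_exists F a b c :
    factorisation F -> a * b * c = fvalue F ->
    Frobenius_pair a b -> Frobenius_pair b c ->
  has two_Frobenius_profile (cartesian (map two_Frobenius_options F)).
Proof.
move=> factF abcF frob_ab frob_bc.
have [cab a_gt1 b_gt1 _] := frob_ab; have [cbc _ c_gt1 _] := frob_bc.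
have prF : all prime (unzip1 F) by case/andP: factF.
apply/hasP; exists [seq (a`_x.1, b`_x.1, c`_x.1) | x : nat * nat <- F].
  apply: map_in_cartesian => -[p e] xF.
  apply: two_Frobenius_options_part (ltnW a_gt1) (ltnW b_gt1) (ltnW c_gt1) cab cbc _.
    by apply: (allP prF); apply: (map_f fst xF).
  by rewrite abcF (part_fvalue factF xF).
rewrite /two_Frobenius_profile -!map_comp; apply/andP; split.
  by apply: Frobenius_pair_profile; rewrite // -abcF dvdn_mulr.
by apply: Frobenius_pair_profile; rewrite // -abcF -mulnA dvdn_mull.
Qed.

Definition mathieu_factorisations : seq (seq (nat * nat)) :=
  [:: [:: (2, 4); (3, 2); (5, 1); (11, 1)];
      [:: (2, 6); (3, 3); (5, 1); (11, 1)];
      [:: (2, 7); (3, 2); (5, 1); (7, 1); (11, 1)];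
      [:: (2, 7); (3, 2); (5, 1); (7, 1); (11, 1); (23, 1)];
      [:: (2, 10); (3, 3); (5, 1); (7, 1); (11, 1); (23, 1)]].

Lemma mathieu_orders_fvalue : mathieu_orders = map fvalue mathieu_factorisations.
Proof.
rewrite /mathieu_orders /fvalue /=.
by congr [:: _; _; _; _; _]; rewrite !big_cons big_nil /=; lia.
Qed.

Lemma mathieu_profiles_excluded :
  all (fun F => [&& factorisation F,
                    ~~ has Frobenius_profile (cartesian (map Frobenius_options F))
                  & ~~ has two_Frobenius_profile
                         (cartesian (map two_Frobenius_options F))])
      mathieu_factorisations.
Proof. by vm_compute. Qed.

Local Open Scope group_scope.

(* No group of Mathieu order is Frobenius (a complement has a kernel by
   Frobenius' theorem) or 2-Frobenius. *)
Theorem lemma2p8 (gT : finGroupType) (G : {group gT}) :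
  #|G| \in mathieu_orders ->
  ~~ [Frobenius G] /\ ~ two_Frobenius G.
Proof.
rewrite mathieu_orders_fvalue => /mapP[F /(allP mathieu_profiles_excluded)].
case/and3P=> factF noFrob noTwoFrob oG; split.
  apply/negP=> /existsP[H /Frobenius_kernel_exists[K /FrobeniusWker frobK]].
  have [_ _ /normal_sub sKG _] := Frobenius_kerP frobK.
  case/negP: noFrob; apply: Frobenius_profile_exists factF _ (Frobenius_pair_orders frobK).
  by rewrite Lagrange.
case/two_Frobenius_orders=> a [b [c [abcG frob_ab frob_bc]]].
case/negP: noTwoFrob; apply: two_Frobenius_profile_exists frob_ab frob_bc => //.
by rewrite abcG.
Qed.
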